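(* Assume the setting of the context and fix $\epsilon_2>0$. Consider any (finite or infinite) sequence of subdivision operations applied to the interval partitions. Then after finitely many subdivisions, $\hat{\mathcal{P}}(\epsilon_2)$ becomes invariant to further subdivision: there is $N$ such that every subdivision after the $N$-th leaves $\hat{\mathcal{P}}(\epsilon_2)$ (as a function of $\theta$) unchanged.
   Context: For $t\in[0,T]$ and trajectory parameters $\theta$, the robot pieces $b_{ij}(t,\theta)\subset\mathbb{R}^3$ and obstacle pieces $o_k\subset\mathbb{R}^3$ are given (finitely many triples $(i,j,k)$); $\text{dist}$ is the shortest Euclidean distance between sets and $d_0\ge0$. $\mathcal{P}$ is a barrier function on $(0,\infty)$, and $\mathcal{P}_{ijk}(t,\theta)=\mathcal{P}(\text{dist}(b_{ij}(t,\theta),o_k)-d_0)$. For each triple $(i,j,k)$ there is a finite partition of $[0,T]$ into closed intervals $[T_0^l,T_1^l]$ (indexed by $l$); a subdivision replaces one interval $[T_0^l,T_1^l]$ of one triple's partition by $[T_0^l,(T_0^l+T_1^l)/2]$ and $[(T_0^l+T_1^l)/2,T_1^l]$. Let $\mathcal{P}_{ijkl}(\theta)=\mathcal{P}_{ijk}((T_0^l+T_1^l)/2,\theta)$. The hybrid penalty is $$\hat{\mathcal{P}}(\epsilon_2)=\sum_{ijkl}\begin{cases}(T_1^l-T_0^l)\mathcal{P}_{ijkl}&T_1^l-T_0^l\ge\epsilon_2\\ \int_{T_0^l}^{T_1^l}\mathcal{P}_{ijk}(t,\theta)\,dt&T_1^l-T_0^l<\epsilon_2,\end{cases}$$ the sum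 running over all triples and all intervals of their current partitions. *)

From HB Require Import structures.
From mathcomp Require Import all_boot all_order all_algebra.
From mathcomp Require Import all_classical all_reals all_analysis.
Set Implicit Arguments. Unset Strict Implicit. Unset Printing Implicit Defensive.
Import Order.TTheory GRing.Theory Num.Theory.
Import numFieldNormedType.Exports.
Local Open Scope classical_set_scope.
Local Open Scope ring_scope.

Section Defs.
Variable R : realType.

Definition pt3 := 'rV[R]_3.

Definition euclid (x y : pt3) : R :=
  Num.sqrt (\sum_(i < 3) (x ord0 i - y ord0 i) ^+ 2).

Definition dist (A B : set pt3) : R :=
  inf [set euclid x y | x in A & y in B].

Definition is_barrier (P : R -> R) : Prop :=
  {within `]0, +oo[, continuous P} /\ (P x @[x --> 0^'+] --> +oo).

Definition Pijk {Theta IJ K : Type} (P : R -> R) (d0 : R)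
  (b : IJ -> R -> Theta -> set pt3) (o : K -> set pt3)
  (tr : IJ * K) (t : R) (th : Theta) : R :=
  P (dist (b tr.1 t th) (o tr.2) - d0).

(* A partition of [0,T] into closed intervals, given by its breakpoints
   0 = s_0 < s_1 < ... < s_m = T (m >= 1); interval l is [s_l, s_(l+1)]. *)
Definition is_partition (T : R) (s : seq R) : Prop :=
  [/\ (1 < size s)%N, head 0 s = 0, last 0 s = T & sorted <%R s].

Definition subdiv (s : seq R) (l : nat) : seq R :=
  take l.+1 s ++ ((nth 0 s l + nth 0 s l.+1) / 2) :: drop l.+1 s.

Definition hyb_term (eps2 : R) (f : R -> R) (T0 T1 : R) : R :=
  if eps2 <= T1 - T0 then (T1 - T0) * f ((T0 + T1) / 2)
  else Rintegral lebesgue_measure `[T0, T1] f.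

Definition hyb_sum (eps2 : R) (f : R -> R) (s : seq R) : R :=
  \sum_(l < (size s).-1) hyb_term eps2 f (nth 0 s l) (nth 0 s l.+1).

Definition hybrid_penalty {Theta : Type} {Tr : finType} (S : {set Tr})
  (F : Tr -> R -> Theta -> R) (eps2 : R) (parts : Tr -> seq R) : Theta -> R :=
  fun th => \sum_(tr in S) hyb_sum eps2 (fun t => F tr t th) (parts tr).

(* one step of a (finite or infinite) sequence of subdivision operations:
   None = no further operation, Some (tr, l) = subdivide interval l of the
   partition of triple tr *)
Definition step {Tr : eqType} (parts : Tr -> seq R) (op : option (Tr * nat))
  : Tr -> seq R :=
  match op with
  | None => parts
  | Some (tr, l) => fun tr' => if tr' == tr then subdiv (parts tr) l else parts tr'
  end.

Fixpoint states {Tr : eqType} (parts0 : Tr -> seq R) (ops : nat -> option (Tr * nat))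
  (n : nat) : Tr -> seq R :=
  match n with
  | 0 => parts0
  | n'.+1 => step (states parts0 ops n') (ops n')
  end.

End Defs.

From HB Require Import structures.
From mathcomp Require Import all_boot all_order all_algebra.
From mathcomp Require Import all_classical all_reals all_analysis.
From mathcomp Require Import lra.
Import Order.TTheory GRing.Theory Num.Theory.
Import numFieldNormedType.Exports.
Local Open Scope classical_set_scope.
Local Open Scope ring_scope.

(* Weigh an interval of length L by 2L - eps2 if L >= eps2 and by 0 otherwise,
   and let Phi >= 0 be the total weight of all partitions.  Halving an interval
   shorter than eps2 changes neither Phi nor the hybrid penalty, because the
   penalty integrates over both halves exactly and the integral is additive.
   Halving an interval of length at least eps2 lowers Phi by at least eps2.
   Hence Phi never increases, and the penalty can only change finitely often. *)

Lemma eventually_constant_of_potential (R : archiRealFieldType) (A : Type)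
    (f : nat -> A) (phi : nat -> R) (eps : R) :
  0 < eps -> (forall n, 0 <= phi n) -> (forall n, phi n.+1 <= phi n) ->
  (forall n, f n.+1 = f n \/ phi n.+1 <= phi n - eps) ->
  exists N, forall n, (N <= n)%N -> f n.+1 = f n.
Proof.
move=> eps_gt0 phi_ge0 phi_noninc f_or_drop.
have phi_homo := (nonincreasing_seqP phi).1 phi_noninc.
suff stable k n0 : phi n0 < k%:R * eps ->
    exists N, forall n, (N <= n)%N -> f n.+1 = f n.
  apply: (stable (Num.bound (phi 0%N / eps)) 0%N).
  by rewrite -ltr_pdivrMr // archi_boundP // divr_ge0 // ltW.
elim: k n0 => [|k IHk] n0 lt_phi; first by have := phi_ge0 n0; lra.
have [|/existsNP[n /not_implyP[n0_le_n fn_neq]]] :=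
  pselect (forall n, (n0 <= n)%N -> f n.+1 = f n); first by exists n0.
apply: (IHk n.+1).
have [//|drop] := f_or_drop n.
have := phi_homo _ _ n0_le_n.
rewrite -natr1 mulrDl mul1r in lt_phi; lra.
Qed.

Section GapSum.
Context {R : realType}.

Definition gap_sum (g : R -> R -> R) (s : seq R) : R :=
  \sum_(i < (size s).-1) g (nth 0 s i) (nth 0 s i.+1).

Lemma hyb_sumE eps f : hyb_sum eps f = gap_sum (hyb_term eps f).
Proof. by []. Qed.

Lemma gap_sum_cons g x t : gap_sum g (x :: t) = \sum_(y <- pairmap g x t) y.
Proof.
rewrite /gap_sum (big_nth 0) size_pairmap big_mkord.
by apply: eq_bigr => i _; rewrite (nth_pairmap 0).
Qed.

Lemma last_take {T : Type} (x0 x : T) t l :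
  (l <= size t)%N -> last x (take l t) = nth x0 (x :: t) l.
Proof. by elim: t l x => [|y t IHt] [|l] x //= /IHt. Qed.

Lemma gap_sum_subdiv g s l : (l.+1 < size s)%N ->
  gap_sum g (subdiv s l) = gap_sum g s - g s`_l s`_l.+1 +
    (g s`_l ((s`_l + s`_l.+1) / 2) + g ((s`_l + s`_l.+1) / 2) s`_l.+1).
Proof.
case: s => [//|x t] /= l_lt.
rewrite /subdiv /= !gap_sum_cons -[in pairmap g x t](cat_take_drop l t).
rewrite (drop_nth 0 l_lt) !pairmap_cat !big_cat /= !big_cons (last_take 0) 1?ltnW //.
lra.
Qed.

Lemma subdiv_in_itv (a c : R) s l : (l.+1 < size s)%N ->
  {subset s <= `[a, c]} -> {subset subdiv s l <= `[a, c]}.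
Proof.
move=> l_lt s_in x.
rewrite mem_cat inE => /or3P[/mem_take/s_in // | /eqP-> | /mem_drop/s_in //].
have := s_in _ (mem_nth 0 (ltnW l_lt)); have := s_in _ (mem_nth 0 l_lt).
rewrite !in_itv /= => /andP[? ?] /andP[? ?]; apply/andP; split; lra.
Qed.

Lemma partition_in_itv {T : R} {s} : is_partition T s -> {subset s <= `[0, T]}.
Proof.
move=> [size_s head_s last_s sorted_s] x /(nthP 0)[i i_lt <-].
have nth_mono := lt_sorted_leq_nth 0 sorted_s.
have s_gt0 : (0 < size s)%N by apply: ltn_trans size_s.
rewrite in_itv /= -{1}head_s -nth0 -last_s -nth_last.
by rewrite !nth_mono ?inE ?leq0n ?prednK //= -ltnS prednK.
Qed.

Lemma Rintegral_itv_cc_split (f : R -> R) a m c : a <= m <= c ->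
  lebesgue_measure.-integrable `[a, c] (EFin \o f) ->
  Rintegral lebesgue_measure `[a, c] f =
  Rintegral lebesgue_measure `[a, m] f + Rintegral lebesgue_measure `[m, c] f.
Proof.
move=> /andP[am mc] f_int.
rewrite -[X in _ = _ + X]Rintegral_itv_obnd_cbnd.
  have := @Rintegral_itvB R f _ _ m f_int; rewrite !bnd_simp => /(_ am mc) <-.
  by rewrite addrC subrK.
apply: integrableS f_int => //.
by apply: subset_itvScc; rewrite bnd_simp.
Qed.

Lemma hyb_term_mid_short (eps : R) f a c : 0 < eps -> c - a < eps ->
  lebesgue_measure.-integrable `[a, c] (EFin \o f) ->
  hyb_term eps f a ((a + c) / 2) + hyb_term eps f ((a + c) / 2) c =
  hyb_term eps f a c.
Proof.
move=> eps_gt0 short f_int.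
have not_long u : u < eps -> (eps <= u) = false by rewrite ltNge => /negbTE.
rewrite /hyb_term !not_long; try lra.
have [ac|ca] := leP a c.
  by rewrite -Rintegral_itv_cc_split //; apply/andP; split; lra.
by rewrite !set_itv_ge ?Rintegral_set0 ?addr0 // bnd_simp -ltNge; lra.
Qed.

Definition gap_potential (eps a c : R) : R :=
  if eps <= c - a then 2 * (c - a) - eps else 0.

Lemma gap_potential_ge0 eps a c : 0 < eps -> 0 <= gap_potential eps a c.
Proof. by rewrite /gap_potential; case: ifP => //; lra. Qed.

Lemma gap_potential_mid_short eps a c : 0 < eps -> c - a < eps ->
  gap_potential eps a ((a + c) / 2) + gap_potential eps ((a + c) / 2) c =
  gap_potential eps a c.
Proof.
move=> eps_gt0 short.
have not_long u : u < eps -> (eps <= u) = false by rewrite ltNge => /negbTE.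
by rewrite /gap_potential !not_long ?addr0 //; lra.
Qed.

Lemma gap_potential_mid_long eps a c : 0 < eps -> eps <= c - a ->
  gap_potential eps a ((a + c) / 2) + gap_potential eps ((a + c) / 2) c <=
  gap_potential eps a c - eps.
Proof.
move=> eps_gt0 long; rewrite /gap_potential long.
have -> : (a + c) / 2 - a = (c - a) / 2 by lra.
have -> : c - (a + c) / 2 = (c - a) / 2 by lra.
by case: ifP; lra.
Qed.

Lemma big_step_subdiv {V : zmodType} {Tr : finType} (S : {set Tr})
    (F : Tr -> seq R -> V) parts tr l :
  \sum_(j in S) F j (step parts (Some (tr, l)) j) =
  \sum_(j in S) F j (parts j) +
  (if tr \in S then F tr (subdiv (parts tr) l) - F tr (parts tr) else 0).
Proof.
rewrite /=; case: ifPn => trS.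
  rewrite !(bigD1 tr trS) /= eqxx [RHS]addrC addrA subrK.
  by congr (_ + _); apply: eq_bigr => j /andP[_ /negbTE ->].
rewrite addr0; apply: eq_bigr => j jS.
by case: eqP => // j_tr; rewrite -j_tr jS in trS.
Qed.

End GapSum.

Section States.
Context {R : realType} {Tr : eqType} {a c : R}.

Lemma step_in_itv (parts : Tr -> seq R) op :
  (forall tr, {subset parts tr <= `[a, c]}) ->
  (forall tr l, op = Some (tr, l) -> (l.+1 < size (parts tr))%N) ->
  forall tr, {subset step parts op tr <= `[a, c]}.
Proof.
case: op => [[tr l]|] parts_in op_valid tr' //=.
by case: ifP => // _; apply: subdiv_in_itv (op_valid _ _ erefl) _.
Qed.

Lemma states_in_itv (parts0 : Tr -> seq R) ops :
  (forall tr, {subset parts0 tr <= `[a, c]}) ->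
  (forall n tr l, ops n = Some (tr, l) ->
     (l.+1 < size (states parts0 ops n tr))%N) ->
  forall n tr, {subset states parts0 ops n tr <= `[a, c]}.
Proof.
move=> parts0_in ops_valid; elim=> [//|n IHn] /=.
exact: step_in_itv IHn (ops_valid n).
Qed.

End States.

Section Potential.
Context {R : realType} {Theta : Type} {Tr : finType}.
Variables (S : {set Tr}) (F : Tr -> R -> Theta -> R) (T eps : R).
Hypothesis eps_gt0 : 0 < eps.
Hypothesis F_integrable : forall tr th, tr \in S ->
  lebesgue_measure.-integrable `[0, T] (fun t => (F tr t th)%:E).

Definition partition_potential (parts : Tr -> seq R) : R :=
  \sum_(tr in S) gap_sum (gap_potential eps) (parts tr).

Lemma partition_potential_ge0 parts : 0 <= partition_potential parts.
Proof.
by apply: sumr_ge0 => tr _; apply: sumr_ge0 => i _; apply: gap_potential_ge0.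
Qed.

Lemma step_penalty_stable_or_potential_drop parts op :
  (forall tr, {subset parts tr <= `[0, T]}) ->
  (forall tr l, op = Some (tr, l) -> (l.+1 < size (parts tr))%N) ->
  partition_potential (step parts op) <= partition_potential parts /\
  (hybrid_penalty S F eps (step parts op) = hybrid_penalty S F eps parts
   \/ partition_potential (step parts op) <= partition_potential parts - eps).
Proof.
case: op => [[tr l]|] parts_in op_valid; last by split; [|left].
have l_lt := op_valid tr l erefl.
set a := nth 0 (parts tr) l; set c := nth 0 (parts tr) l.+1.
pose gp := gap_potential eps.
have potE : partition_potential (step parts (Some (tr, l))) =
    partition_potential parts +
    (if tr \in S then gp a ((a + c) / 2) + gp ((a + c) / 2) c - gp a c else 0).
  rewrite /partition_potential (big_step_subdiv S (fun=> gap_sum gp)).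
  rewrite gap_sum_subdiv // -/a -/c; case: (tr \in S) => //; congr (_ + _); lra.
have penaltyE th : hybrid_penalty S F eps (step parts (Some (tr, l))) th =
    hybrid_penalty S F eps parts th + (if tr \in S then
      hyb_sum eps (fun t => F tr t th) (subdiv (parts tr) l) -
      hyb_sum eps (fun t => F tr t th) (parts tr) else 0).
  exact: (big_step_subdiv S (fun j => hyb_sum eps (fun t => F j t th))).
have [short|long] := ltP (c - a) eps.
  suff -> : hybrid_penalty S F eps (step parts (Some (tr, l))) =
            hybrid_penalty S F eps parts.
    by rewrite potE gap_potential_mid_short // subrr if_same addr0; split; [|left].
  apply/funext => th; rewrite penaltyE; case: ifPn => trS; last by rewrite addr0.
  rewrite hyb_sumE gap_sum_subdiv // -/a -/c hyb_term_mid_short //.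
    by rewrite -[RHS]addr0; congr (_ + _); lra.
  have := parts_in tr a (mem_nth 0 (ltnW l_lt)).
  have := parts_in tr c (mem_nth 0 l_lt).
  rewrite !in_itv /= => /andP[c_ge0 c_leT] /andP[a_ge0 a_leT].
  apply: integrableS (F_integrable _ _ trS) => //.
  by apply: subset_itvScc; rewrite bnd_simp.
have drop : gp a ((a + c) / 2) + gp ((a + c) / 2) c <= gp a c - eps.
  exact: gap_potential_mid_long.
case: (boolP (tr \in S)) => trS in potE penaltyE *.
  rewrite potE; split; [|right].
    by rewrite gerDl subr_le0 (le_trans drop) // gerBl ltW.
  by rewrite lerD2l lerBlDr (addrC (- eps)).
rewrite potE addr0; split; [|left] => //.
by apply/funext => th; rewrite penaltyE addr0.
Qed.

End Potential.

Theorem lemma3 (R : realType) (T : R) (Theta : Type) (IJ K : finType)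
  (b : IJ -> R -> Theta -> set (pt3 R)) (o : K -> set (pt3 R))
  (d0 : R) (P : R -> R) (S : {set IJ * K}) (eps2 : R)
  (parts0 : IJ * K -> seq R) (ops : nat -> option ((IJ * K) * nat)) :
  0 <= d0 ->
  is_barrier P ->
  (* the penalty integrals are well defined *)
  (forall tr th, tr \in S ->
     lebesgue_measure.-integrable `[0, T] (fun t => (Pijk P d0 b o tr t th)%:E)) ->
  (forall tr, is_partition T (parts0 tr)) ->
  (* every operation subdivides an existing interval *)
  (forall n tr l, ops n = Some (tr, l) ->
     (l.+1 < size (states parts0 ops n tr))%N) ->
  0 < eps2 ->
  exists N : nat, forall n : nat, (N <= n)%N ->
    hybrid_penalty S (Pijk P d0 b o) eps2 (states parts0 ops n.+1)
    = hybrid_penalty S (Pijk P d0 b o) eps2 (states parts0 ops n).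
Proof.
move=> _ _ P_integrable parts0_partition ops_valid eps2_gt0.
have states_in n tr : {subset states parts0 ops n tr <= `[0, T]}.
  by apply: (states_in_itv parts0 ops _ ops_valid) => tr'; apply: partition_in_itv.
have step_n n := step_penalty_stable_or_potential_drop S _ T eps2 eps2_gt0
  P_integrable _ _ (states_in n) (ops_valid n).
apply: (@eventually_constant_of_potential _ _ _
  (fun n => partition_potential S eps2 (states parts0 ops n)) eps2) => // n.
- exact: partition_potential_ge0.
- by have [] := step_n n.
- by have [] := step_n n.
Qed.
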